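(* Let $[n]$ be a set of items, $\boldsymbol\theta=(\boldsymbol\theta_1,\dots,\boldsymbol\theta_n)$ a vector of independent non-negative real random variables, $f:\mathbb{R}^n_{\ge0}\to\mathbb{R}_{\ge0}$ a monotone submodular value function, and $k\in[n]$. Let $\pi$ be an optimal adaptive policy selecting $k$ items, and let $x_i$ be the probability that item $i$ is selected by $\pi$. Let $\hat{\boldsymbol\theta}$ be a random vector with the same distribution as $\boldsymbol\theta$ and independent of $\boldsymbol\theta$. Then for every $S\subseteq[n]$, $$\mathbb{E}_{\boldsymbol\theta,\hat{\boldsymbol\theta}}\big[f\big(\boldsymbol\theta(S)\vee\hat{\boldsymbol\theta}(U_{\hat{\boldsymbol\theta},k}(\pi)\cup S)\big)\big]\le \mathbb{E}_{\boldsymbol\theta,\hat{\boldsymbol\theta}}\big[f(\boldsymbol\theta(S)\vee\hat{\boldsymbol\theta}(S))\big]+\sum_{i\in[n]\setminus S}x_i\,\mathbb{E}_{\boldsymbol\theta}\big[\Delta(i\mid\boldsymbol\theta(S))\big].$$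
   Context: A monotone submodular value function $f$ is non-decreasing in each coordinate and satisfies $f(x\vee y)+f(x\wedge y)\le f(x)+f(y)$ for all $x,y\in\mathbb{R}^n_{\ge0}$ ($\vee,\wedge$ componentwise max/min). For $S\subseteq[n]$, $\boldsymbol\theta(S)$ is the random vector with $i$-th coordinate $\boldsymbol\theta_i$ if $i\in S$ and $0$ otherwise (observing it also reveals $S$); similarly for $\hat{\boldsymbol\theta}(S)$. An adaptive policy $\pi$ starts with $U=\emptyset$ and for $k$ steps observes the partial state $\xi=\boldsymbol\theta(U)$ and adds an item $\pi(\xi)\in[n]\setminus U$ to $U$; the final set is $U_{\boldsymbol\theta,k}(\pi)$, and $U_{\hat{\boldsymbol\theta},k}(\pi)$ is the set obtained when the policy observes partial states of $\hat{\boldsymbol\theta}$ instead. $\pi$ is optimal if it maximizes $\mathbb{E}[f(\boldsymbol\theta(U_{\boldsymbol\theta,k}(\pi)))]$. For $i\in[n]$, $\mathbf e^i$ is a random vector (independent of everything else) whose $i$-th coordinate has the distribution of $\boldsymbol\theta_i$ and whose other coordinates are $0$; for a partial state $\xi$, $\Delta(i\mid\xi):=\mathbb{E}_{\mathbf e^i}[f(\xi\vee\mathbf e^i)-f(\xi)]$. *)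

From HB Require Import structures.
From mathcomp Require Import all_boot all_order all_algebra.
From mathcomp Require Import all_classical all_reals all_analysis.
Set Implicit Arguments. Unset Strict Implicit. Unset Printing Implicit Defensive.
Import Order.TTheory GRing.Theory Num.Theory.
Local Open Scope ring_scope.
Local Open Scope classical_set_scope.

Section Defs.
Context {R : realType} {n : nat}.

Definition vjoin (x y : 'I_n -> R) : 'I_n -> R := fun i => Num.max (x i) (y i).
Definition vmeet (x y : 'I_n -> R) : 'I_n -> R := fun i => Num.min (x i) (y i).

Definition nonneg_vec (x : 'I_n -> R) := forall i, 0 <= x i.

Definition restr (S : {set 'I_n}) (x : 'I_n -> R) : 'I_n -> R :=
  fun i => if i \in S then x i else 0.

Definition unitv (i : 'I_n) (v : R) : 'I_n -> R :=
  fun j => if j == i then v else 0.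

Definition monotone_submodular (f : ('I_n -> R) -> R) :=
  [/\ forall x, nonneg_vec x -> 0 <= f x,
      forall x y, nonneg_vec x -> nonneg_vec y -> (forall i, x i <= y i) -> f x <= f y
    & forall x y, nonneg_vec x -> nonneg_vec y ->
        f (vjoin x y) + f (vmeet x y) <= f x + f y].

(* Borel measurability of a function on R^n, expressed through composition
   with measurable coordinate maps on an arbitrary measurable space. *)
Definition vec_measurable (F : ('I_n -> R) -> R) :=
  forall (d : measure_display) (T : measurableType d) (g : 'I_n -> T -> R),
    (forall i, measurable_fun setT (g i)) ->
    measurable_fun setT (fun t => F (fun i => g i t)).

(* An adaptive policy: given the observed set U and the partial state
   xi = x(U), it chooses the next item. *)
Definition policy := {set 'I_n} -> ('I_n -> R) -> 'I_n.

Definition valid_policy (k : nat) (pi : policy) :=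
  forall (U : {set 'I_n}) xi, (#|U| < k)%N -> pi U xi \notin U.

Definition policy_measurable (pi : policy) :=
  forall (U : {set 'I_n}) j, vec_measurable (fun xi => (pi U xi == j)%:R).

Fixpoint run (pi : policy) (x : 'I_n -> R) (k : nat) : {set 'I_n} :=
  match k with
  | 0 => finset.set0
  | k'.+1 => let U := run pi x k' in pi U (restr U x) |: U
  end.

End Defs.

Section Prob.
Context {R : realType} {d : measure_display} {T : measurableType d}.

Definition mutually_independent (P : probability T R) (I : finType)
    (X : I -> T -> R) :=
  forall B : I -> set R, (forall i, measurable (B i)) ->
    P [set t | forall i, B i (X i t)] =
    (\prod_(i : I) fine (P (X i @^-1` B i)))%:E.

Definition same_law (P : probability T R) (X Y : T -> R) :=
  forall B : set R, measurable B -> P (X @^-1` B) = P (Y @^-1` B).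

Definition vec_of {n} (X : 'I_n -> T -> R) (t : T) : 'I_n -> R := fun i => X i t.

(* Delta(i | xi) = E_{e^i}[f(xi \/ e^i) - f(xi)], where e^i has i-th coordinate
   distributed as theta_i; xi is a fixed (deterministic) partial state, so the
   expectation over e^i is the integral against the law of theta_i, written
   here as an integral over P of v = th i t. *)
Definition Delta {n} (P : probability T R) (th : 'I_n -> T -> R)
    (f : ('I_n -> R) -> R) (i : 'I_n) (xi : 'I_n -> R) : \bar R :=
  (\int[P]_t (f (vjoin xi (unitv i (th i t))) - f xi)%:E)%E.

End Prob.

(* Pointwise, diminishing returns bounds f (th(S) \/ thh(U :|: S)), for U the
   set selected by pi when observing thh, by f (th(S) \/ thh(S)) plus the
   marginal gains f (th(S) \/ e_i thh_i) - f (th(S)) over i in U \ S.  Whether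
   pi selects i does not depend on thh_i, which pi observes only after
   selecting i; so the indicator of i \in U is independent of (th, thh_i), and
   the expected i-th gain factors as P[i selected] * E[Delta(i | th(S))].
   This independence is made concrete by placing th, thh_i and the other thh_j
   on three independent copies of the sample space, which carry the same
   cylinder laws as (th, thh). *)

From HB Require Import structures.
From mathcomp Require Import all_boot all_order all_algebra.
From mathcomp Require Import all_classical all_reals all_analysis.
From mathcomp Require Import lra.
From mathcomp Require Import measurable_realfun.
Import Order.TTheory GRing.Theory Num.Theory.
Local Open Scope ring_scope.
Local Open Scope classical_set_scope.

Section Vectors.
Context {R : realType} {n : nat}.
Implicit Types (a b x : 'I_n -> R) (f : ('I_n -> R) -> R).

Lemma vjoinA a b x : vjoin a (vjoin b x) = vjoin (vjoin a b) x.
Proof. by apply: funext => j; rewrite /vjoin maxA. Qed.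

Lemma vjoin_ge0 a b : nonneg_vec a -> nonneg_vec (vjoin a b).
Proof. by move=> a0 j; rewrite /vjoin le_max a0. Qed.

Lemma restr_ge0 (U : {set 'I_n}) x : nonneg_vec x -> nonneg_vec (restr U x).
Proof. by move=> x0 j; rewrite /restr; case: ifP. Qed.

Lemma restr_setU1 (U : {set 'I_n}) p x : nonneg_vec x ->
  restr (p |: U) x = vjoin (restr U x) (unitv p (x p)).
Proof.
move=> x0; apply: funext => j; rewrite /vjoin /restr /unitv in_setU1.
have [->|_] /= := eqVneq j p; first by case: (p \in U); rewrite ?maxxx ?max_r.
by case: (j \in U); rewrite ?max_l ?maxxx.
Qed.

Definition marginal f a (i : 'I_n) (r : R) := f (vjoin a (unitv i r)) - f a.

Lemma marginal_ge0 f a i r : monotone_submodular f -> nonneg_vec a ->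
  0 <= marginal f a i r.
Proof.
case=> _ mono _ a0; rewrite subr_ge0; apply: mono => //; first exact: vjoin_ge0.
by move=> j; rewrite /vjoin le_max lexx.
Qed.

Lemma marginal_diminishing f a b i r : monotone_submodular f -> nonneg_vec a ->
  (forall j, a j <= b j) -> b i = a i -> marginal f b i r <= marginal f a i r.
Proof.
case=> _ _ sub a0 ab bia; set y := vjoin a (unitv i r).
have b0 : nonneg_vec b by move=> j; exact: le_trans (a0 j) (ab j).
have joinE : vjoin b y = vjoin b (unitv i r).
  by rewrite /y vjoinA; congr vjoin; apply: funext => j; rewrite /vjoin max_l.
have meetE : vmeet b y = a.
  apply: funext => j; rewrite /vmeet /y /vjoin /unitv.
  case: eqP => [->|_]; first by rewrite bia min_l // le_max lexx.
  by rewrite max_l // min_r.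
have := sub b y b0 (@vjoin_ge0 a (unitv i r) a0); rewrite joinE meetE /marginal.
lra.
Qed.

Lemma join_restr_setU_le f a x (S U : {set 'I_n}) :
  monotone_submodular f -> nonneg_vec a -> nonneg_vec x ->
  f (vjoin a (restr (U :|: S) x)) <=
  f (vjoin a (restr S x)) + \sum_(i in U :\: S) marginal f a i (x i).
Proof.
move=> hf a0 x0; rewrite -[U]set_enum; elim: (enum U) => [|p s IH].
  by rewrite finset.set_nil finset.set0U finset.set0D big_set0 addr0.
rewrite finset.set_cons -finset.setUA; set V := [set:: s] in IH *.
have [pVS|pVS] := boolP (p \in V :|: S).
  have -> : p |: (V :|: S) = V :|: S by apply/finset.setUidPr; rewrite finset.sub1set.
  suff -> : (p |: V) :\: S = V :\: S by [].
  apply/setP => j; rewrite !inE; have [->|//] := eqVneq j p.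
  by move: pVS; rewrite !inE => /orP[] ->; rewrite ?orbT.
move: pVS; rewrite inE negb_or => /andP[pV pS].
rewrite (_ : (p |: V) :\: S = p |: (V :\: S)); last first.
  by apply/setP => j; rewrite !inE; case: eqVneq => // ->; rewrite pS.
have pVS : p \notin V :\: S by rewrite finset.in_setD (negbTE pV) andbF.
rewrite big_setU1 //= addrCA.
set b := vjoin a (restr (V :|: S) x).
have -> : vjoin a (restr (p |: (V :|: S)) x) = vjoin b (unitv p (x p)).
  by rewrite restr_setU1 // vjoinA.
have bpa : b p = a p.
  by rewrite /b /vjoin /restr inE (negbTE pV) (negbTE pS) max_l.
have ab j : a j <= b j by rewrite /b /vjoin le_max lexx.
have := @marginal_diminishing f a b p (x p) hf a0 ab bpa; rewrite /marginal; lra.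
Qed.

Lemma join_restr_setU_le_indicator f a x (S U : {set 'I_n}) :
  monotone_submodular f -> nonneg_vec a -> nonneg_vec x ->
  f (vjoin a (restr (U :|: S) x)) <=
  f (vjoin a (restr S x)) + \sum_(i in ~: S) (i \in U)%:R * marginal f a i (x i).
Proof.
move=> hf a0 x0; rewrite (_ : \sum_(i in ~: S) _ = \sum_(i in U :\: S) marginal f a i (x i)).
  exact: join_restr_setU_le.
rewrite big_mkcond [RHS]big_mkcond; apply: eq_bigr => i _; rewrite !inE.
by case: (i \in S); case: (i \in U); rewrite /= ?mul1r ?mul0r.
Qed.

End Vectors.

Section Runs.
Context {R : realType} {n : nat} (pi : @policy R n).
Implicit Types x y : 'I_n -> R.

Lemma run_agree_off {i x y} : (forall j, j != i -> x j = y j) ->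
  forall m, i \notin run pi x m -> run pi y m = run pi x m.
Proof.
move=> xy; elim=> [//|m IH] /=; rewrite in_setU1 negb_or => /andP[_ iU].
rewrite IH //; congr (pi _ _ |: _); apply: funext => j; rewrite /restr.
case: ifP => // jU; rewrite xy //.
by apply: contraNneq iU => <-.
Qed.

Lemma mem_run_agree i x y m : (forall j, j != i -> x j = y j) ->
  (i \in run pi x m) = (i \in run pi y m).
Proof.
move=> xy; have yx j : j != i -> y j = x j by move=> /xy ->.
have [iy|iy] := boolP (i \in run pi y m).
  by apply: contraTT iy => ix; rewrite (run_agree_off xy m ix).
by rewrite (run_agree_off yx m iy) (negbTE iy).
Qed.

End Runs.

Section MeasurableBool.
Context d (T : measurableType d) (R : realType).

Lemma measurable_natr_bool (b : T -> bool) : measurable_fun setT b ->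
  measurable_fun setT (fun t => (b t)%:R : R).
Proof.
move=> mb; rewrite (_ : (fun t => _) = fun t => if b t then 1 else 0).
  exact: measurable_fun_ifT.
by apply: funext => t; case: (b t).
Qed.

Lemma measurable_exists (I : finType) (b : I -> T -> bool) :
  (forall i, measurable_fun setT (b i)) ->
  measurable_fun setT (fun t => [exists i, b i t]).
Proof.
move=> mb; apply: (measurable_fun_bool true).
rewrite (_ : _ `&` _ = \bigcup_(i in setT) (setT `&` b i @^-1` [set true])).
  by apply: fin_bigcup_measurable => // i _; exact: mb.
apply/seteqP; split => t /=.
- by move=> [_ /existsP[i hi]]; exists i.
- by move=> [i _ [_ hi]]; split => //; apply/existsP; exists i.
Qed.

Lemma integral_natr_bool (mu : {measure set T -> \bar R}) (b : T -> bool) :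
  measurable_fun setT b -> (\int[mu]_t ((b t)%:R)%:E)%E = mu [set t | b t].
Proof.
move=> mb; have mA : measurable [set t | b t].
  rewrite (_ : [set t | b t] = setT `&` b @^-1` [set true]); first exact: mb.
  by apply/seteqP; split => t //= [].
rewrite -[in RHS](setIT [set t | b t]) -integral_indic //.
apply: eq_integral => t _; rewrite indicE.
have [bt|/negP bt] := boolP (b t).
  by rewrite mem_set.
by rewrite memNset.
Qed.

End MeasurableBool.

Section FamilyMeasurable.
Context {R : realType} {n : nat} {d} {T : measurableType d} {Z : 'I_n -> T -> R}.
Hypothesis mZ : forall j, measurable_fun setT (Z j).

Lemma measurable_restr (A : T -> {set 'I_n}) :
  (forall j, measurable_fun setT (fun t => j \in A t)) ->
  forall j, measurable_fun setT (fun t => restr (A t) (vec_of Z t) j).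
Proof. by move=> mA j; apply: measurable_fun_ifT => //; exact: mZ. Qed.

Lemma measurable_marginal (f : ('I_n -> R) -> R) i (r : T -> R) :
  vec_measurable f -> measurable_fun setT r ->
  measurable_fun setT (fun t => marginal f (vec_of Z t) i (r t)).
Proof.
move=> mf mr; apply: measurable_funB; last exact: mf.
apply: (mf _ _ (fun l t => vjoin (vec_of Z t) (unitv i (r t)) l)) => l.
by apply: measurable_maxr; [exact: mZ | rewrite /unitv; case: (l == i)].
Qed.

Context { pi : @policy R n} (hpi : policy_measurable pi).

Lemma measurable_policy_eq (U : {set 'I_n}) p :
  measurable_fun setT (fun t => pi U (restr U (vec_of Z t)) == p).
Proof.
have mU : forall j, measurable_fun setT (fun t => restr U (vec_of Z t) j).
  by apply: measurable_restr => j; exact: measurable_cst.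
apply: (measurable_fun_bool true).
rewrite (_ : _ `&` _ = setT `&` (fun t => (pi U (restr U (vec_of Z t)) == p)%:R : R)
  @^-1` [set 1]); first exact: (hpi U p _ _ _ mU).
apply/seteqP; split => t /= [_ ht]; split => //; first by rewrite ht.
by move: ht; case: (_ == p) => //= /esym/eqP; rewrite oner_eq0.
Qed.

Lemma measurable_run_eq m U :
  measurable_fun setT (fun t => run pi (vec_of Z t) m == U).
Proof.
elim: m U => [|m IH] U; first exact: (measurable_cst (finset.set0 == U)).
rewrite (_ : (fun t => _) = fun t => [exists V, (run pi (vec_of Z t) m == V) &&
    [exists p, (pi V (restr V (vec_of Z t)) == p) && (p |: V == U)]]).
  apply: measurable_exists => V; apply: measurable_and => //.
  apply: measurable_exists => p; apply: measurable_and => //.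
  exact: measurable_policy_eq.
apply: funext => t /=; apply/eqP/existsP.
- move=> <-; set V := run pi _ m; exists V; rewrite eqxx /=.
  by apply/existsP; exists (pi V (restr V (vec_of Z t))); rewrite !eqxx.
- by move=> [V /andP[/eqP -> /existsP[p /andP[/eqP -> /eqP]]]].
Qed.

Lemma measurable_mem_run m j :
  measurable_fun setT (fun t => j \in run pi (vec_of Z t) m).
Proof.
rewrite (_ : (fun t => _) =
  fun t => [exists V, (run pi (vec_of Z t) m == V) && (j \in V)]).
  by apply: measurable_exists => V; apply: measurable_and => //; exact: measurable_run_eq.
apply: funext => t; apply/idP/existsP => [jU|[V /andP[/eqP -> //]]].
by exists (run pi (vec_of Z t) m); rewrite eqxx.
Qed.

End FamilyMeasurable.

Section CylinderLaw.
Context {R : realType} (K : finType).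

Definition rvec := K -> R.
HB.instance Definition _ := Choice.on rvec.
HB.instance Definition _ := isPointed.Build rvec (fun _ => 0%R).

Definition cylinders : set (set rvec) :=
  [set C | exists B : K -> set R, (forall k, measurable (B k)) /\
     C = [set v | forall k, B k (v k)]].

Definition cylinder_space : measurableType cylinders.-sigma :=
  g_sigma_algebraType cylinders.

Lemma cylindersT : cylinders setT.
Proof. by exists (fun _ => setT); split => //; apply/seteqP; split. Qed.

Lemma cylindersI : setI_closed cylinders.
Proof.
move=> _ _ [B [mB ->]] [C [mC ->]].
exists (fun k => B k `&` C k); split; first by move=> k; exact: measurableI.
apply/seteqP; split => v /=; first by move=> [h1 h2] k; split.
by move=> h; split => k; case: (h k).
Qed.

Lemma measurable_coord k : measurable_fun setT (fun v : cylinder_space => v k).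
Proof.
move=> _ A mA; rewrite setTI; apply: sub_sigma_algebra.
exists (fun j => if j == k then A else setT); split; first by move=> j; case: ifP.
apply/seteqP; split => v /=; last by move=> /(_ k); rewrite eqxx.
by move=> h j; case: ifP => // /eqP ->.
Qed.

Lemma measurable_cylinder_map {d} {T : measurableType d} {Y : K -> T -> R} :
  (forall k, measurable_fun setT (Y k)) ->
  measurable_fun setT ((fun t k => Y k t) : T -> cylinder_space).
Proof.
move=> mY; apply: (@measurability _ _ T cylinder_space setT _ cylinders) => //.
move=> _ [_ [B [mB ->]] <-].
rewrite (_ : _ `&` _ = \bigcap_(k in setT) (setT `&` Y k @^-1` B k)).
  by apply: fin_bigcap_measurable => // k _; exact: mY.
apply/seteqP; split => t /=; first by move=> [_ h] k _; split.
by move=> h; split => // k; case: (h k I).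
Qed.

Lemma ge0_integral_eq_of_cylinders {d1 d2}
    {T1 : measurableType d1} {T2 : measurableType d2}
    {P1 : probability T1 R} {P2 : probability T2 R}
    {Y1 : K -> T1 -> R} {Y2 : K -> T2 -> R} :
  (forall k, measurable_fun setT (Y1 k)) ->
  (forall k, measurable_fun setT (Y2 k)) ->
  (forall B : K -> set R, (forall k, measurable (B k)) ->
     P1 [set t | forall k, B k (Y1 k t)] = P2 [set t | forall k, B k (Y2 k t)]) ->
  forall phi : cylinder_space -> R, measurable_fun setT phi -> (forall v, 0 <= phi v) ->
  (\int[P1]_t (phi (fun k => Y1 k t))%:E = \int[P2]_t (phi (fun k => Y2 k t))%:E)%E.
Proof.
move=> mY1 mY2 hB phi mphi phi0.
have mphiE : measurable_fun setT (EFin \o phi) by apply/measurable_EFinP.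
pose X1 : {mfun T1 >-> cylinder_space} := HB.pack ((fun t k => Y1 k t) : T1 -> _)
  (isMeasurableFun.Build _ _ T1 _ _ (measurable_cylinder_map mY1)).
pose X2 : {mfun T2 >-> cylinder_space} := HB.pack ((fun t k => Y2 k t) : T2 -> _)
  (isMeasurableFun.Build _ _ T2 _ _ (measurable_cylinder_map mY2)).
transitivity (\int[distribution P1 X1]_v (phi v)%:E)%E.
  by rewrite ge0_integral_distribution// => v; rewrite lee_fin.
transitivity (\int[distribution P2 X2]_v (phi v)%:E)%E;
  last by rewrite ge0_integral_distribution// => v; rewrite lee_fin.
apply: eq_measure_integral => A mA _.
apply: (@g_sigma_algebra_measure_unique _ R cylinder_space cylinders _ (fun _ => setT)
  _ _ (distribution P1 X1) (distribution P2 X2)) => //.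
- by move=> C hC; exact: sub_sigma_algebra.
- by move=> _; exact: cylindersT.
- by apply/seteqP; split => // v _; exists 0%N.
- exact: cylindersI.
- by move=> _ [B [mB ->]]; rewrite -[LHS]/(P1 [set t | forall k, B k (Y1 k t)]) hB.
- by move=> _; rewrite -[X in (X < _)%E]/(P1 setT) probability_setT ltry.
Qed.

End CylinderLaw.

Section ProbabilityFacts.
Context {d} {T : measurableType d} {R : realType}.

Lemma ge0_integral_sum_in (mu : {measure set T -> \bar R}) (I : finType)
    (A : {pred I}) (g : I -> T -> R) :
  (forall i, measurable_fun setT (g i)) -> (forall i t, 0 <= g i t) ->
  (\int[mu]_t (\sum_(i in A) g i t)%:E = \sum_(i in A) \int[mu]_t (g i t)%:E)%E.
Proof.
move=> mg g0; under eq_integral do rewrite -sumEFin -big_enum.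
rewrite ge0_integral_sum ?big_enum // => [i|i t _]; last by rewrite lee_fin.
by apply/measurable_EFinP; exact: mg.
Qed.

Lemma mutually_independent_pred {P : probability T R} {I : finType}
    {X : I -> T -> R} (J : pred I) (B : I -> set R) :
  mutually_independent P X -> (forall i, measurable (B i)) ->
  P [set t | forall i, J i -> B i (X i t)] =
  (\prod_(i | J i) fine (P (X i @^-1` B i)))%:E.
Proof.
move=> hX mB; pose C i := if J i then B i else setT.
rewrite (_ : [set t | _] = [set t | forall i, C i (X i t)]); last first.
  apply/seteqP; split => t /= h i; rewrite /C; first by case: ifP => // /h.
  by move=> Ji; have := h i; rewrite /C Ji.
rewrite hX => [|i]; last by rewrite /C; case: (J i).
congr (_%:E); rewrite [RHS]big_mkcond; apply: eq_bigr => i _.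
by rewrite /C; case: (J i) => //; rewrite preimage_setT probability_setT.
Qed.

End ProbabilityFacts.

Lemma ge0_integral_prod_mul {d1 d2} {T1 : measurableType d1} {T2 : measurableType d2}
    {R : realType} (m1 : {sigma_finite_measure set T1 -> \bar R})
    (m2 : {sigma_finite_measure set T2 -> \bar R}) (F : T1 -> R) (G : T2 -> R) :
  measurable_fun setT F -> measurable_fun setT G ->
  (forall x, 0 <= F x) -> (forall y, 0 <= G y) ->
  (\int[m1 \x m2]_z (F z.1 * G z.2)%:E = \int[m1]_x (F x)%:E * \int[m2]_y (G y)%:E)%E.
Proof.
move=> mF mG F0 G0; rewrite fubini_tonelli1; last 2 first.
- apply/measurable_EFinP; apply: measurable_funM.
    exact: measurableT_comp mF measurable_fst.
  exact: measurableT_comp mG measurable_snd.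
- by move=> z; rewrite lee_fin mulr_ge0.
transitivity (\int[m1]_x ((F x)%:E * \int[m2]_y (G y)%:E))%E.
  apply: eq_integral => x _; rewrite /fubini_F -ge0_integralZl_EFin //.
  - by move=> y _; rewrite lee_fin.
  - exact/measurable_EFinP.
rewrite ge0_integralZr //; first exact/measurable_EFinP.
- by move=> x _; rewrite lee_fin.
- by apply: integral_ge0 => y _; rewrite lee_fin.
Qed.

Section IndependentCopies.
Context {R : realType} {d : measure_display} {T : measurableType d}
  (P : probability T R) {n : nat} (th thh : 'I_n -> T -> R).
Hypotheses (mth : forall i, measurable_fun setT (th i))
  (mthh : forall i, measurable_fun setT (thh i)).
Let X (s : 'I_n + 'I_n) := match s with inl i => th i | inr i => thh i end.
Hypotheses (hind : mutually_independent P X)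
  (hlaw : forall i, same_law P (thh i) (th i)).

Lemma measurable_th_rect (J : pred 'I_n) {C : 'I_n -> set R} :
  (forall j, measurable (C j)) -> measurable [set t | forall j, J j -> C j (th j t)].
Proof.
move=> mC; rewrite (_ : [set t | _] =
  \bigcap_(j in setT) (setT `&` th j @^-1` (if J j then C j else setT))).
  by apply: fin_bigcap_measurable => // j _; apply: mth => //; case: (J j).
apply/seteqP; split => t /=; first by move=> h j _; split => //; case: ifP => // /h.
by move=> h j Jj; have [_] := h j I; rewrite /preimage /= Jj.
Qed.

Lemma mutually_independent_th (J : pred 'I_n) {C : 'I_n -> set R} :
  (forall j, measurable (C j)) ->
  P [set t | forall j, J j -> C j (th j t)] =
  (\prod_(j | J j) fine (P (th j @^-1` C j)))%:E.
Proof.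
move=> mC; pose B (s : 'I_n + 'I_n) := if s is inl j then C j else setT.
have mB s : measurable (B s) by case: s => [j|?]; [exact: mC | exact: measurableT].
have := mutually_independent_pred [pred s | if s is inl j then J j else false] B hind mB.
rewrite big_sumType /= big_pred0_eq mulr1 => <-; congr (P _).
by apply/seteqP; split => t /= h; [case=> // j /h | move=> j /(h (inl j))].
Qed.

Definition decouple (i0 : 'I_n) (s : 'I_n + 'I_n) (w : (T * T) * T) : R :=
  match s with
  | inl j => th j w.1.1
  | inr j => if j == i0 then th i0 w.1.2 else th j w.2
  end.

Lemma measurable_decouple i0 s : measurable_fun setT (decouple i0 s).
Proof.
case: s => [j|j]; rewrite /decouple.
  by apply: measurableT_comp => //; exact: measurableT_comp measurable_fst measurable_fst.
case: (j == i0); apply: measurableT_comp => //.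
exact: measurableT_comp measurable_snd measurable_fst.
Qed.

Lemma cylinder_prob_decouple i0 (B : 'I_n + 'I_n -> set R) :
  (forall s, measurable (B s)) ->
  P [set t | forall s, B s (X s t)] =
  ((P \x P) \x P)%E [set w | forall s, B s (decouple i0 s w)].
Proof.
move=> mB; pose C1 j := B (inl j); pose C2 j := B (inr j).
have mC1 j : measurable (C1 j) by exact: mB.
have mC2 j : measurable (C2 j) by exact: mB.
rewrite (_ : [set w | _] =
  ([set t | forall j, predT j -> C1 j (th j t)] `*`
   [set t | forall j, pred1 i0 j -> C2 j (th j t)]) `*`
   [set t | forall j, predC1 i0 j -> C2 j (th j t)]); last first.
  apply/seteqP; split => [[[t1 t2] t3]|[[t1 t2] t3]] /=.
  - move=> h; split; first split.
    + by move=> j _; exact: (h (inl j)).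
    + by move=> j /eqP ->; have := h (inr i0); rewrite /= eqxx.
    + by move=> j ji; have := h (inr j); rewrite /= (negbTE ji).
  - move=> [[h1 h2] h3] [j|j] /=; first exact: h1.
    by case: eqP => [->|/eqP ji]; [exact: h2|exact: h3].
have mA1 := measurable_th_rect predT mC1.
have mA2 := measurable_th_rect (pred1 i0) mC2.
have mA3 := measurable_th_rect (predC1 i0) mC2.
have prod3 (A1 A2 A3 : set T) : measurable A1 -> measurable A2 -> measurable A3 ->
    ((P \x P) \x P)%E ((A1 `*` A2) `*` A3) = (P A1 * P A2 * P A3)%E.
  move=> m1 m2 m3; rewrite product_measure1E //; last exact: measurableX.
  by congr (_ * _)%E; exact: product_measure1E.
rewrite prod3 //.
rewrite 3?mutually_independent_th // -!EFinM hind //; congr (_%:E).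
rewrite big_sumType /= big_pred1_eq -mulrA; congr (_ * _).
rewrite (bigD1 i0) //=; congr (_ * _).
  by rewrite /C2 hlaw.
by apply: eq_bigr => j _; rewrite /C2 hlaw.
Qed.

Lemma ge0_integral_decouple i0 (phi : cylinder_space ('I_n + 'I_n)%type -> R) :
  measurable_fun setT phi -> (forall v, 0 <= phi v) ->
  (\int[P]_t (phi (fun s => X s t))%:E =
   \int[(P \x P) \x P]_w (phi (fun s => decouple i0 s w))%:E)%E.
Proof.
apply: ge0_integral_eq_of_cylinders; last exact: cylinder_prob_decouple.
  by case=> j; [exact: mth | exact: mthh].
exact: measurable_decouple.
Qed.

Variables (f : ('I_n -> R) -> R) (pi : @policy R n) (S : {set 'I_n}).
Hypotheses (hf : monotone_submodular f) (mf : vec_measurable f)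
  (mpi : policy_measurable pi).
Hypotheses (th0 : forall i t, 0 <= th i t) (thh0 : forall i t, 0 <= thh i t).

Let thS t := restr S (vec_of th t).

Lemma thS_ge0 t : nonneg_vec (thS t).
Proof. by apply: restr_ge0 => j; exact: th0. Qed.

Lemma integral_mem_run_marginal i k :
  (\int[P]_t ((i \in run pi (vec_of thh t) k)%:R * marginal f (thS t) i (thh i t))%:E
   = P [set t | i \in run pi (vec_of th t) k] * \int[P]_t Delta P th f i (thS t))%E.
Proof.
(* [Num.max 0] makes [phi] nonnegative also off the nonnegative orthant. *)
pose phi (v : cylinder_space ('I_n + 'I_n)%type) := Num.max 0
  ((i \in run pi (fun l => v (inr l)) k)%:R *
   marginal f (restr S (fun l => v (inl l))) i (v (inr i))).
have mphi : measurable_fun setT phi.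
  apply: measurable_maxr => //; apply: measurable_funM.
    apply/measurable_natr_bool/measurable_mem_run => // l; exact: measurable_coord.
  apply: measurable_marginal => //; last exact: measurable_coord.
  by apply: measurable_restr => l; [exact: measurable_coord | exact: measurable_cst].
pose F (x : T * T) := marginal f (restr S (vec_of th x.1)) i (th i x.2).
pose G (y : T) := (i \in run pi (vec_of th y) k)%:R : R.
have F0 x : 0 <= F x by apply: marginal_ge0 => //; exact: thS_ge0.
have mF : measurable_fun setT F.
  apply: measurable_marginal => //; last exact: measurableT_comp (mth i) measurable_snd.
  apply: measurable_restr => j; last exact: measurable_cst.
  exact: measurableT_comp (mth j) measurable_fst.
have mG := measurable_mem_run mth mpi k i.
transitivity (\int[P]_t (phi (fun s => X s t))%:E)%E.
  by apply: eq_integral => t _; rewrite /phi max_r // mulr_ge0 // marginal_ge0 //; exact: thS_ge0.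
rewrite (ge0_integral_decouple i _ mphi); last by move=> v; rewrite le_max lexx.
transitivity (\int[(P \x P) \x P]_w (F w.1 * G w.2)%:E)%E.
  apply: eq_integral => w _; congr (_%:E); rewrite /phi max_r; last first.
    by rewrite mulr_ge0 // marginal_ge0 //; exact: thS_ge0.
  rewrite mulrC; congr (_ * _); first by rewrite /F /decouple eqxx.
  rewrite /G (mem_run_agree pi i _ (vec_of th w.2) k) // => j ji.
  by rewrite /decouple (negbTE ji).
rewrite (ge0_integral_prod_mul ((P \x P)%E : probability _ R) P) //; last first.
  exact: measurable_natr_bool.
rewrite integral_natr_bool // muleC; congr (_ * _)%E.
apply: fubini_tonelli1; last by move=> x; rewrite lee_fin.
exact/measurable_EFinP.
Qed.

Lemma measurable_f_join_restr (A B : T -> {set 'I_n}) :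
  (forall j, measurable_fun setT (fun t => j \in A t)) ->
  (forall j, measurable_fun setT (fun t => j \in B t)) ->
  measurable_fun setT
    (fun t => f (vjoin (restr (A t) (vec_of th t)) (restr (B t) (vec_of thh t)))).
Proof.
move=> mA mB; apply: (mf _ _
  (fun j t => vjoin (restr (A t) (vec_of th t)) (restr (B t) (vec_of thh t)) j)) => j.
by apply: measurable_maxr; exact: measurable_restr.
Qed.

Lemma integral_join_restr_run_le k :
  (\int[P]_t (f (vjoin (thS t) (restr (run pi (vec_of thh t) k :|: S) (vec_of thh t))))%:E
   <= \int[P]_t (f (vjoin (thS t) (restr S (vec_of thh t))))%:E
      + \sum_(i in ~: S) (P [set t | i \in run pi (vec_of th t) k] *
                         \int[P]_t Delta P th f i (thS t)))%E.
Proof.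
pose U t := run pi (vec_of thh t) k.
pose g t := f (vjoin (thS t) (restr S (vec_of thh t))).
pose h i t := (i \in U t)%:R * marginal f (thS t) i (thh i t).
have mS j : measurable_fun setT (fun t : T => j \in S) by exact: measurable_cst.
have mU j : measurable_fun setT (fun t => j \in U t) by exact: measurable_mem_run.
have h0 i t : 0 <= h i t by rewrite mulr_ge0 // marginal_ge0 //; exact: thS_ge0.
have mh i : measurable_fun setT (h i).
  apply: measurable_funM; first exact: measurable_natr_bool.
  by apply: measurable_marginal => //; exact: measurable_restr.
have msum : measurable_fun setT (fun t => \sum_(i in ~: S) h i t).
  rewrite (_ : (fun t => _) = fun t => \sum_(i <- enum (~: S)) h i t).
    exact: measurable_sum.
  by apply: funext => t; rewrite big_enum.
have f0 x : nonneg_vec x -> 0 <= f x by case: hf => f0 _ _; exact: f0.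
apply: (@le_trans _ _ (\int[P]_t ((g t + \sum_(i in ~: S) h i t)%:E))%E).
  apply: ge0_le_integral => //.
  - by move=> t _; rewrite lee_fin; apply/f0/vjoin_ge0/thS_ge0.
  - apply/measurable_EFinP/measurable_f_join_restr => // j.
    rewrite (_ : (fun t => _) = fun t => (j \in U t) || (j \in S)).
      exact: measurable_or.
    by apply: funext => t; rewrite finset.in_setU.
  - by apply/measurable_EFinP/measurable_funD => //; exact: measurable_f_join_restr.
  - move=> t _; rewrite lee_fin; apply: join_restr_setU_le_indicator => //.
      exact: thS_ge0.
    by move=> j; exact: thh0.
under eq_integral do rewrite EFinD.
rewrite ge0_integralD //; first last.
- exact/measurable_EFinP.
- by move=> t _; rewrite lee_fin sumr_ge0.
- by apply/measurable_EFinP; exact: measurable_f_join_restr.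
- by move=> t _; rewrite lee_fin; apply/f0/vjoin_ge0/thS_ge0.
rewrite ge0_integral_sum_in //; apply: leeD => //; apply: lee_sum => i _.
by rewrite /h /U integral_mem_run_marginal.
Qed.

End IndependentCopies.

Theorem lemma3 (R : realType) (d : measure_display) (T : measurableType d)
    (P : probability T R) (n : nat)
    (th thh : 'I_n -> T -> R) (f : ('I_n -> R) -> R) (k : nat) (pi : policy)
    (S : {set 'I_n}) :
  (forall i, measurable_fun setT (th i)) ->
  (forall i, measurable_fun setT (thh i)) ->
  (forall i t, 0 <= th i t) -> (forall i t, 0 <= thh i t) ->
  mutually_independent P
    (fun s : 'I_n + 'I_n => match s with inl i => th i | inr i => thh i end) ->
  (forall i, same_law P (thh i) (th i)) ->
  monotone_submodular f -> vec_measurable f ->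
  (1 <= k <= n)%N ->
  valid_policy k pi -> policy_measurable pi ->
  (forall pi' : policy, valid_policy k pi' -> policy_measurable pi' ->
     (\int[P]_t (f (restr (run pi' (vec_of th t) k) (vec_of th t)))%:E <=
      \int[P]_t (f (restr (run pi (vec_of th t) k) (vec_of th t)))%:E)%E) ->
  (\int[P]_t (f (vjoin (restr S (vec_of th t))
                       (restr (run pi (vec_of thh t) k :|: S) (vec_of thh t))))%:E
   <= \int[P]_t (f (vjoin (restr S (vec_of th t)) (restr S (vec_of thh t))))%:E
      + \sum_(i in ~: S)
          (P [set t | i \in run pi (vec_of th t) k]
           * \int[P]_t Delta P th f i (restr S (vec_of th t))))%E.
Proof.
move=> mth mthh th0 thh0 hind hlaw hf mf _ _ mpi _.
exact: integral_join_restr_run_le.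
Qed.
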